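(* Let $L>0$ and let $\sigma_1<\sigma_2<\dots$ be the eigenvalues of the one-dimensional buckling problem $u''''=-\sigma u''$ on $(0,L)$, $u(0)=u'(0)=u(L)=u'(L)=0$. Then, as $z\to+\infty$, $$R_1(z)=\sum_j(z-\sigma_j)_+=\frac{2L}{3\pi}z^{\frac32}-\frac32 z+o(z).$$
   Context: $a_+=\max\{a,0\}$. The eigenvalue problem is understood in the weak sense in $H^2_0(0,L)$: $\int_0^L u''\phi''=\sigma\int_0^L u'\phi'$ for all $\phi\in H^2_0(0,L)$. *)

From Stdlib Require Import Reals Lra.
From Coquelicot Require Import Coquelicot.
Open Scope R_scope.

(* Eigenfunctions are taken smooth (every weak H^2_0 eigenfunction
   is of the form A + B x + C cos(kx) + D sin(kx), hence extends smoothly). *)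
Definition buckling_eigenvalue (L sigma : R) : Prop :=
  exists u : R -> R,
    (forall (k : nat) (x : R), ex_derive_n u k x) /\
    (forall x, 0 < x < L -> Derive_n u 4 x = - sigma * Derive_n u 2 x) /\
    u 0 = 0 /\ Derive_n u 1 0 = 0 /\ u L = 0 /\ Derive_n u 1 L = 0 /\
    (exists x, 0 < x < L /\ u x <> 0).

Definition pos_part (a : R) : R := Rmax a 0.

Definition riesz1 (sig : nat -> R) (z : R) : R :=
  Series (fun j => pos_part (z - sig j)).

From Stdlib Require Import Reals Lra Lia.
From Coquelicot Require Import Coquelicot.
Open Scope R_scope.

(* Every eigenfunction is u = A (1 - cos kx) + B (kx - sin kx) with k = sqrt sigma (sigma <= 0 is
   excluded by an energy identity), and the clamped conditions at L have a nontrivial solution (A, B)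
   iff X = kL/2 is a root of sin X (sin X - X cos X).  The positive roots are PI, 2PI, ...
   interlaced with the roots of tan X = X, which lie in (n PI, n PI + PI/2) and tend to
   n PI + PI/2.  Hence sigma_j = (PI/L)^2 rho_j^2 with j + 1 <= rho_j <= j + 2 and
   rho_j >= j + 2 - o(1).  Comparing with the lattice sums
   sum_j (Y^2 - (j + c)^2)_+ = 2/3 Y^3 - (c - 1/2) Y^2 + O(Y) for c = 2 and c = 2 - delta,
   with z = (PI/L)^2 Y^2, gives the asymptotics; the constant 3/2 is 2 - 1/2. *)

(* [auto_derive], using hypotheses [forall t, is_derive f t (g t)] for the unknown functions [f] *)
Ltac auto_derive_chain :=
  auto_derive;
  [ repeat split; eexists; eauto
  | repeat match goal with
    | H : forall t, is_derive ?f t (?g t) |- context [Derive (fun x => ?f x) ?t] =>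
        rewrite (is_derive_unique (fun x : R => f x) t (g t) (H t))
    end ].

Lemma MVT_open (f df : R -> R) (a b : R) : a < b ->
  (forall x, a <= x <= b -> is_derive f x (df x)) ->
  exists c, a < c < b /\ f b - f a = df c * (b - a).
Proof.
  intros Hab Hd.
  destruct (MVT_cor2 f df a b Hab) as [c [Hfc Hc]].
  - intros x Hx. apply is_derive_Reals, Hd, Hx.
  - exists c. split; assumption.
Qed.

Lemma is_derive_nonpos_le (f df : R -> R) (a b : R) : a <= b ->
  (forall x, a <= x <= b -> is_derive f x (df x)) ->
  (forall x, a < x < b -> df x <= 0) -> f b <= f a.
Proof.
  intros Hab Hd Hdf.
  destruct (Req_dec a b) as [<-|Hne]; [lra|].
  destruct (MVT_open f df a b) as [c [Hc Hfc]]; [lra|exact Hd|].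
  specialize (Hdf c Hc). nra.
Qed.

Lemma is_derive_pos_lt (f df : R -> R) (a b : R) : a < b ->
  (forall x, a <= x <= b -> is_derive f x (df x)) ->
  (forall x, a < x < b -> 0 < df x) -> f a < f b.
Proof.
  intros Hab Hd Hdf.
  destruct (MVT_open f df a b) as [c [Hc Hfc]]; [exact Hab|exact Hd|].
  specialize (Hdf c Hc). nra.
Qed.

Lemma eq_on_of_is_derive (f g df dg : R -> R) (a b : R) :
  (forall x, a <= x <= b -> is_derive f x (df x)) ->
  (forall x, a <= x <= b -> is_derive g x (dg x)) ->
  (forall x, a < x < b -> df x = dg x) -> f a = g a ->
  forall x, a <= x <= b -> f x = g x.
Proof.
  intros Hf Hg Hdfg Ha x Hx.
  destruct (Req_dec a x) as [<-|Hne]; [exact Ha|].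
  destruct (MVT_open (fun t => f t - g t) (fun t => df t - dg t) a x) as [c [Hc Hfc]].
  - lra.
  - intros t Ht. apply (is_derive_minus f g); [apply Hf | apply Hg]; lra.
  - rewrite Hdfg in Hfc by lra. lra.
Qed.

Lemma is_derive_vanishing (f : R -> R) (a b x l : R) : a < x < b ->
  (forall t, a <= t <= b -> f t = 0) -> is_derive f x l -> l = 0.
Proof.
  intros Hx Hf Hd.
  assert (Hloc : locally x (fun t => a < t < b)).
  { apply (open_and (fun t => a < t) (fun t => t < b)); [apply open_gt | apply open_lt | exact Hx]. }
  assert (H0 : is_derive f x 0).
  { apply (is_derive_ext_loc (fun _ => 0)); [|auto_derive; reflexivity].
    apply (filter_imp (fun t => a < t < b)); [|exact Hloc].
    intros t Ht. symmetry. apply Hf. lra. }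
  rewrite <- (is_derive_unique f x l Hd). exact (is_derive_unique f x 0 H0).
Qed.

Lemma harmonic_oscillator_solution (k L : R) (v v1 v2 : R -> R) : k <> 0 ->
  (forall t, is_derive v t (v1 t)) -> (forall t, is_derive v1 t (v2 t)) ->
  (forall t, 0 < t < L -> v2 t = - k ^ 2 * v t) ->
  forall x, 0 <= x <= L -> v x = v 0 * cos (k * x) + v1 0 / k * sin (k * x).
Proof.
  intros Hk Hv Hv1 Hv2.
  set (h := fun t => v 0 * cos (k * t) + v1 0 / k * sin (k * t)).
  set (h1 := fun t => - k * v 0 * sin (k * t) + v1 0 * cos (k * t)).
  (* the energy of the difference v - h is conserved, and vanishes at 0 *)
  set (E := fun t => (v1 t - h1 t) ^ 2 + k ^ 2 * (v t - h t) ^ 2).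
  assert (HE : forall x, 0 <= x <= L -> E x = E 0).
  { intros x Hx.
    apply (eq_on_of_is_derive E (fun _ => E 0)
      (fun t => 2 * (v1 t - h1 t) * (v2 t + k ^ 2 * v t)) (fun _ => 0) 0 L); auto.
    - intros t _. unfold E, h, h1. auto_derive_chain. field. exact Hk.
    - intros t _. auto_derive; reflexivity.
    - intros t Ht. rewrite Hv2 by exact Ht. ring. }
  intros x Hx.
  assert (HE0 : E 0 = 0).
  { unfold E, h, h1. rewrite Rmult_0_r, cos_0, sin_0. ring. }
  specialize (HE x Hx). rewrite HE0 in HE. unfold E in HE.
  assert (Hk2 : 0 < k ^ 2) by (apply pow2_gt_0; exact Hk).
  assert (0 <= (v1 x - h1 x) ^ 2) by apply pow2_ge_0.
  assert (0 <= (v x - h x) ^ 2) by apply pow2_ge_0.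
  assert (Hw : (v x - h x) ^ 2 = 0) by nra.
  simpl in Hw. rewrite Rmult_1_r in Hw.
  apply Rmult_integral in Hw. unfold h in Hw. lra.
Qed.

Definition buckling_char (X : R) : R := sin X * (sin X - X * cos X).

Definition clamped_mode (A B k x : R) : R := A * (1 - cos (k * x)) + B * (k * x - sin (k * x)).

Lemma clamped_mode_boundary (A B K : R) :
  A * (1 - cos K) + B * (K - sin K) = 0 -> A * sin K + B * (1 - cos K) = 0 ->
  A * buckling_char (K / 2) = 0 /\ B * buckling_char (K / 2) = 0.
Proof.
  intros E1 E2.
  assert (Hdet : (1 - cos K) ^ 2 - sin K * (K - sin K) = 4 * buckling_char (K / 2)).
  { set (Y := K / 2). replace K with (2 * Y) by (unfold Y; field).
    rewrite cos_2a_sin, sin_2a. unfold buckling_char.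
    assert (Hsc := sin2_cos2 Y). unfold Rsqr in Hsc.
    transitivity (4 * sin Y ^ 2 * (sin Y * sin Y + cos Y * cos Y) - 4 * Y * sin Y * cos Y);
      [ring | rewrite Hsc; ring]. }
  assert (HA : A * ((1 - cos K) ^ 2 - sin K * (K - sin K)) =
    (1 - cos K) * (A * (1 - cos K) + B * (K - sin K)) - (K - sin K) * (A * sin K + B * (1 - cos K)))
    by ring.
  assert (HB : B * ((1 - cos K) ^ 2 - sin K * (K - sin K)) =
    (1 - cos K) * (A * sin K + B * (1 - cos K)) - sin K * (A * (1 - cos K) + B * (K - sin K)))
    by ring.
  rewrite E1, E2, Hdet in HA, HB. split; lra.
Qed.

Section ClampedSolution.
Variables (L s : R) (u u1 u2 u3 u4 : R -> R).
Hypothesis Hu : forall t, is_derive u t (u1 t).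
Hypothesis Hu1 : forall t, is_derive u1 t (u2 t).
Hypothesis Hu2 : forall t, is_derive u2 t (u3 t).
Hypothesis Hu3 : forall t, is_derive u3 t (u4 t).
Hypothesis Hode : forall t, 0 < t < L -> u4 t = - s * u2 t.
Hypothesis Hu_0 : u 0 = 0.
Hypothesis Hu1_0 : u1 0 = 0.
Hypothesis Hu_L : u L = 0.
Hypothesis Hu1_L : u1 L = 0.

Lemma clamped_nonpos_trivial : s <= 0 -> forall x, 0 <= x <= L -> u x = 0.
Proof.
  intros Hs.
  (* Phi is nonincreasing on [0, L] and vanishes at both ends, hence everywhere. *)
  set (Phi := fun t => u3 t * u t - u2 t * u1 t + s * (u1 t * u t)).
  set (dPhi := fun t => u4 t * u t - u2 t ^ 2 + s * (u2 t * u t + u1 t ^ 2)).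
  assert (HPhi : forall t, is_derive Phi t (dPhi t)).
  { intros t. unfold Phi, dPhi. auto_derive_chain. ring. }
  assert (HdPhi : forall t, 0 < t < L -> dPhi t = - u2 t ^ 2 + s * u1 t ^ 2).
  { intros t Ht. unfold dPhi. rewrite Hode by exact Ht. ring. }
  assert (HPhi0 : forall x, 0 <= x <= L -> Phi x = 0).
  { intros x Hx.
    assert (Phi x <= Phi 0).
    { apply (is_derive_nonpos_le Phi dPhi); [lra | intros; apply HPhi |].
      intros t Ht. rewrite HdPhi by lra. nra. }
    assert (Phi L <= Phi x).
    { apply (is_derive_nonpos_le Phi dPhi); [lra | intros; apply HPhi |].
      intros t Ht. rewrite HdPhi by lra. nra. }
    unfold Phi in *. rewrite Hu_0, Hu1_0 in *. rewrite Hu_L, Hu1_L in *. lra. }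
  assert (Hu2_zero : forall t, 0 < t < L -> u2 t = 0).
  { intros t Ht.
    assert (H := is_derive_vanishing Phi 0 L t (dPhi t) Ht HPhi0 (HPhi t)).
    rewrite HdPhi in H by exact Ht. nra. }
  assert (Hu1_zero : forall x, 0 <= x <= L -> u1 x = 0).
  { apply (eq_on_of_is_derive u1 (fun _ => 0) u2 (fun _ => 0)); auto.
    intros t _. auto_derive; reflexivity. }
  apply (eq_on_of_is_derive u (fun _ => 0) u1 (fun _ => 0)); auto.
  - intros t _. auto_derive; reflexivity.
  - intros t Ht. apply Hu1_zero. lra.
Qed.

Lemma clamped_pos_shape (k : R) : 0 < k -> s = k ^ 2 ->
  forall x, 0 <= x <= L ->
    u x = clamped_mode (u2 0 / k ^ 2) (u3 0 / k ^ 3) k x /\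
    u1 x = u2 0 / k * sin (k * x) + u3 0 / k ^ 2 * (1 - cos (k * x)).
Proof.
  intros Hk Hsk.
  assert (Hu2x : forall x, 0 <= x <= L -> u2 x = u2 0 * cos (k * x) + u3 0 / k * sin (k * x)).
  { apply (harmonic_oscillator_solution k L u2 u3 u4); auto; [lra|].
    intros t Ht. rewrite Hode, Hsk by exact Ht. ring. }
  assert (Hu1x : forall x, 0 <= x <= L ->
    u1 x = u2 0 / k * sin (k * x) + u3 0 / k ^ 2 * (1 - cos (k * x))).
  { apply (eq_on_of_is_derive _ _ u2 (fun t => u2 0 * cos (k * t) + u3 0 / k * sin (k * t))).
    - intros; apply Hu1.
    - intros t _. auto_derive; [exact I | field; lra].
    - intros t Ht. apply Hu2x. lra.
    - rewrite Hu1_0, Rmult_0_r, sin_0, cos_0. ring. }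
  intros x Hx. split; [|exact (Hu1x x Hx)].
  revert x Hx.
  apply (eq_on_of_is_derive _ _ u1 (fun t => u2 0 / k * sin (k * t) + u3 0 / k ^ 2 * (1 - cos (k * t)))).
  - intros; apply Hu.
  - intros t _. unfold clamped_mode. auto_derive; [exact I | field; lra].
  - intros t Ht. apply Hu1x. lra.
  - unfold clamped_mode. rewrite Hu_0, Rmult_0_r, sin_0, cos_0. ring.
Qed.

Lemma clamped_pos_trivial : 0 < s -> buckling_char (sqrt s * L / 2) <> 0 ->
  forall x, 0 <= x <= L -> u x = 0.
Proof.
  intros Hs Hchar.
  set (k := sqrt s) in *.
  assert (Hk : 0 < k) by (apply sqrt_lt_R0; exact Hs).
  assert (Hsk : s = k ^ 2) by (unfold k; rewrite pow2_sqrt; lra).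
  intros x Hx.
  destruct (clamped_pos_shape k Hk Hsk L) as [EL E1L]; [lra|].
  set (A := u2 0 / k ^ 2) in *. set (B := u3 0 / k ^ 3) in *.
  assert (HAB : A * buckling_char (k * L / 2) = 0 /\ B * buckling_char (k * L / 2) = 0).
  { apply clamped_mode_boundary.
    - rewrite Hu_L in EL. unfold clamped_mode in EL. lra.
    - apply (Rmult_eq_reg_l k); [|lra]. rewrite Rmult_0_r, <- Hu1_L, E1L.
      unfold A, B. field. lra. }
  destruct HAB as [HA HB].
  apply Rmult_integral in HA. apply Rmult_integral in HB.
  destruct (clamped_pos_shape k Hk Hsk x Hx) as [Ex _].
  rewrite Ex. unfold clamped_mode. fold A B.
  destruct HA as [HA|]; [|contradiction]. destruct HB as [HB|]; [|contradiction].
  rewrite HA, HB. ring.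
Qed.

End ClampedSolution.

Lemma tan_gap_pos (X : R) : 0 < X <= PI -> 0 < sin X - X * cos X.
Proof.
  intros HX.
  replace 0 with (sin 0 - 0 * cos 0) at 1 by (rewrite sin_0; ring).
  apply (is_derive_pos_lt (fun t => sin t - t * cos t) (fun t => t * sin t)); [lra| |].
  - intros t _. auto_derive; [exact I | ring].
  - intros t Ht. apply Rmult_lt_0_compat; [lra | apply sin_gt_0; lra].
Qed.

Lemma buckling_char_root_ge_PI (X : R) : 0 < X -> buckling_char X = 0 -> PI <= X.
Proof.
  intros HX Hchar. destruct (Rlt_le_dec X PI) as [HXP|]; [exfalso|assumption].
  assert (0 < sin X) by (apply sin_gt_0; lra).
  assert (0 < sin X - X * cos X) by (apply tan_gap_pos; lra).
  unfold buckling_char in Hchar. nra.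
Qed.

Lemma buckling_char_nPI (n : nat) : buckling_char (INR n * PI) = 0.
Proof.
  unfold buckling_char. rewrite Rmult_comm, sin_eq_0_1 by (exists (Z.of_nat n); now rewrite <- INR_IZR_INZ).
  ring.
Qed.

Definition char_branch (n : nat) (r : R) : R := sin r - (r + INR n * PI) * cos r.

(* Shifting by n PI multiplies both factors of buckling_char by (-1)^n. *)
Lemma buckling_char_shift (n : nat) (r : R) :
  buckling_char (r + INR n * PI) = sin r * char_branch n r.
Proof.
  assert (Hshift : sin (r + INR n * PI) = (-1) ^ n * sin r /\ cos (r + INR n * PI) = (-1) ^ n * cos r).
  { induction n as [|n [IHs IHc]].
    - rewrite Rmult_0_l, Rplus_0_r. split; ring.
    - rewrite S_INR, Rmult_plus_distr_r, Rmult_1_l, <- Rplus_assoc, neg_sin, neg_cos, IHs, IHc.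
      cbn [pow]. split; ring. }
  unfold buckling_char, char_branch. destruct Hshift as [-> ->].
  assert (Hsq : (-1) ^ n * (-1) ^ n = 1).
  { rewrite <- Rpow_mult_distr. replace (-1 * -1) with 1 by ring. apply pow1. }
  transitivity ((-1) ^ n * (-1) ^ n * (sin r * (sin r - (r + INR n * PI) * cos r)));
    [ring | rewrite Hsq; ring].
Qed.

Lemma char_branch_lt (n : nat) (a b : R) : 0 <= a -> a < b -> b <= PI ->
  char_branch n a < char_branch n b.
Proof.
  intros Ha Hab Hb.
  assert (HnP : 0 <= INR n * PI) by (apply Rmult_le_pos; [apply pos_INR | apply Rlt_le, PI_RGT_0]).
  apply (is_derive_pos_lt (char_branch n) (fun r => (r + INR n * PI) * sin r)); [exact Hab| |].
  - intros t _. unfold char_branch. auto_derive; [exact I | ring].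
  - intros t Ht. apply Rmult_lt_0_compat; [lra | apply sin_gt_0; lra].
Qed.

Lemma buckling_char_root_iff (n : nat) (x : R) : INR n * PI < x < INR n * PI + PI ->
  buckling_char x = 0 <-> char_branch n (x - INR n * PI) = 0.
Proof.
  intros Hx.
  replace x with ((x - INR n * PI) + INR n * PI) at 1 by ring.
  rewrite buckling_char_shift.
  assert (0 < sin (x - INR n * PI)) by (apply sin_gt_0; lra).
  split; intros Hc; [apply Rmult_integral in Hc; lra | rewrite Hc; ring].
Qed.

Lemma buckling_char_root_exists (n : nat) : (1 <= n)%nat ->
  exists t, INR n * PI < t < INR n * PI + PI / 2 /\ buckling_char t = 0.
Proof.
  intros Hn. assert (HP := PI_RGT_0).
  assert (HnP : PI <= INR n * PI).
  { rewrite <- (Rmult_1_l PI) at 1. apply Rmult_le_compat_r; [lra | apply (le_INR 1 n), Hn]. }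
  destruct (IVT (char_branch n) 0 (PI / 2)) as [r [Hr Hbr]].
  - intros r. apply continuity_pt_filterlim, (ex_derive_continuous (char_branch n)).
    unfold char_branch. auto_derive. exact I.
  - lra.
  - unfold char_branch. rewrite sin_0, cos_0. lra.
  - unfold char_branch. rewrite sin_PI2, cos_PI2. lra.
  - assert (r <> 0) by (intros ->; unfold char_branch in Hbr; rewrite sin_0, cos_0 in Hbr; lra).
    assert (r <> PI / 2) by (intros ->; unfold char_branch in Hbr; rewrite sin_PI2, cos_PI2 in Hbr; lra).
    exists (r + INR n * PI). split; [lra|].
    apply (buckling_char_root_iff n); [lra|]. now replace (r + INR n * PI - INR n * PI) with r by ring.
Qed.

Lemma buckling_char_root_unique (n : nat) (x y : R) :
  INR n * PI < x < INR n * PI + PI -> INR n * PI < y < INR n * PI + PI ->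
  buckling_char x = 0 -> buckling_char y = 0 -> x = y.
Proof.
  intros Hx Hy Hcx Hcy.
  apply (buckling_char_root_iff n) in Hcx; [|exact Hx].
  apply (buckling_char_root_iff n) in Hcy; [|exact Hy].
  destruct (Rtotal_order x y) as [Hlt|[Heq|Hgt]]; [exfalso|exact Heq|exfalso].
  - assert (char_branch n (x - INR n * PI) < char_branch n (y - INR n * PI))
      by (apply char_branch_lt; lra). lra.
  - assert (char_branch n (y - INR n * PI) < char_branch n (x - INR n * PI))
      by (apply char_branch_lt; lra). lra.
Qed.

Lemma buckling_char_root_location (n : nat) (x : R) : INR n * PI < x < INR n * PI + PI ->
  buckling_char x = 0 ->
  x < INR n * PI + PI / 2 /\
  (forall d, 0 < d <= PI / 2 -> 1 < INR n * PI * sin d -> INR n * PI + PI / 2 - d < x).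
Proof.
  intros Hx Hcx. assert (HP := PI_RGT_0).
  apply (buckling_char_root_iff n) in Hcx; [|exact Hx].
  set (r := x - INR n * PI) in Hcx.
  split.
  - destruct (Rlt_le_dec r (PI / 2)) as [|Hr]; [unfold r in *; lra|exfalso].
    assert (Hb : char_branch n (PI / 2) = 1)
      by (unfold char_branch; rewrite sin_PI2, cos_PI2; ring).
    destruct Hr as [Hr|Hr].
    + assert (char_branch n (PI / 2) < char_branch n r) by (apply char_branch_lt; unfold r in *; lra). lra.
    + rewrite <- Hr in Hcx. lra.
  - intros d Hd Hsd.
    assert (Hneg : char_branch n (PI / 2 - d) < 0).
    { unfold char_branch. rewrite sin_minus, cos_minus, sin_PI2, cos_PI2.
      assert (0 < sin d) by (apply sin_gt_0; lra).
      assert (cos d <= 1) by apply COS_bound.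
      assert (0 <= (PI / 2 - d) * sin d) by (apply Rmult_le_pos; lra).
      nra. }
    destruct (Rlt_le_dec (PI / 2 - d) r) as [|Hr]; [unfold r in *; lra|exfalso].
    destruct Hr as [Hr|Hr].
    + assert (char_branch n r < char_branch n (PI / 2 - d)) by (apply char_branch_lt; unfold r in *; lra). lra.
    + rewrite Hr in Hcx. lra.
Qed.

Definition trig_affine (a b c d k x : R) : R := a + b * x + c * cos (k * x) + d * sin (k * x).

Lemma Derive_n_trig_affine_S (f : R -> R) (n : nat) (a b c d k : R) :
  (forall x, Derive_n f n x = trig_affine a b c d k x) ->
  (forall x, Derive_n f (S n) x = trig_affine b 0 (d * k) (- (c * k)) k x) /\
  (forall x, ex_derive_n f (S n) x).
Proof.
  intros Hf.
  assert (Hd : forall x, is_derive (trig_affine a b c d k) x (trig_affine b 0 (d * k) (- (c * k)) k x)).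
  { intros x. unfold trig_affine. auto_derive; [exact I | ring]. }
  split; intros x; simpl.
  - rewrite (Derive_ext _ _ x Hf). apply is_derive_unique, Hd.
  - apply (ex_derive_ext (trig_affine a b c d k)); [intros t; now rewrite Hf | eexists; apply Hd].
Qed.

Lemma trig_affine_smooth (a b c d k : R) (n : nat) (x : R) :
  ex_derive_n (trig_affine a b c d k) n x.
Proof.
  assert (Hshape : forall m, exists a' b' c' d',
    forall x, Derive_n (trig_affine a b c d k) m x = trig_affine a' b' c' d' k x).
  { intros m. induction m as [|m [a' [b' [c' [d' IH]]]]]; [now exists a, b, c, d|].
    destruct (Derive_n_trig_affine_S _ _ _ _ _ _ _ IH) as [H _]. eauto. }
  destruct n as [|n]; [exact I|].
  destruct (Hshape n) as [a' [b' [c' [d' H]]]].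
  apply (Derive_n_trig_affine_S _ _ _ _ _ _ _ H).
Qed.

Lemma clamped_mode_eigenvalue (L k A B : R) : 0 < k -> PI < k * L ->
  A * (1 - cos (k * L)) + B * (k * L - sin (k * L)) = 0 ->
  A * sin (k * L) + B * (1 - cos (k * L)) = 0 ->
  2 * A + B * PI <> 0 -> buckling_eigenvalue L (k ^ 2).
Proof.
  intros Hk HkL E1 E2 Hnz. assert (HP := PI_RGT_0).
  set (u := trig_affine A (B * k) (- A) (- B) k).
  assert (Hu : forall x, u x = clamped_mode A B k x).
  { intros x. unfold u, trig_affine, clamped_mode. ring. }
  assert (H0 : forall x, Derive_n u 0 x = trig_affine A (B * k) (- A) (- B) k x) by reflexivity.
  destruct (Derive_n_trig_affine_S _ _ _ _ _ _ _ H0) as [H1 _].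
  destruct (Derive_n_trig_affine_S _ _ _ _ _ _ _ H1) as [H2 _].
  destruct (Derive_n_trig_affine_S _ _ _ _ _ _ _ H2) as [H3 _].
  destruct (Derive_n_trig_affine_S _ _ _ _ _ _ _ H3) as [H4 _].
  exists u. split; [apply trig_affine_smooth|].
  split; [intros x _; rewrite H4, H2; unfold trig_affine; ring|].
  split; [rewrite Hu; unfold clamped_mode; rewrite !Rmult_0_r, cos_0, sin_0; ring|].
  split; [rewrite H1; unfold trig_affine; rewrite !Rmult_0_r, cos_0, sin_0; ring|].
  split; [rewrite Hu; exact E1|].
  split.
  { rewrite H1. unfold trig_affine.
    transitivity (k * (A * sin (k * L) + B * (1 - cos (k * L)))); [ring | rewrite E2; ring]. }
  exists (PI / k). split.
  - split; [apply Rdiv_lt_0_compat; lra|].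
    apply (Rmult_lt_reg_l k); [exact Hk|]. field_simplify; lra.
  - rewrite Hu. unfold clamped_mode. replace (k * (PI / k)) with PI by (field; lra).
    rewrite cos_PI, sin_PI. contradict Hnz. lra.
Qed.

Lemma buckling_eigenvalue_of_char_root (L X : R) : 0 < L -> 0 < X ->
  buckling_char X = 0 -> buckling_eigenvalue L ((2 * X / L) ^ 2).
Proof.
  intros HL HX Hchar. assert (HP := PI_RGT_0).
  assert (HXP := buckling_char_root_ge_PI X HX Hchar).
  set (k := 2 * X / L).
  assert (HkL : k * L = 2 * X) by (unfold k; field; lra).
  assert (Hk : 0 < k) by (unfold k; apply Rdiv_lt_0_compat; lra).
  unfold buckling_char in Hchar. apply Rmult_integral in Hchar.
  destruct Hchar as [Hsin|Htan].
  - apply (clamped_mode_eigenvalue L k 1 0); rewrite ?HkL, ?sin_2a, ?cos_2a_sin, ?Hsin; lra.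
  - apply (clamped_mode_eigenvalue L k X (-1)); rewrite ?HkL, ?sin_2a, ?cos_2a_sin; try lra.
    + assert (Hsc := sin2_cos2 X). unfold Rsqr in Hsc.
      transitivity (2 * cos X * (sin X - X * cos X) + 2 * X * (sin X * sin X + cos X * cos X - 1));
        [ring | rewrite Htan, Hsc; ring].
    + transitivity (- 2 * sin X * (sin X - X * cos X)); [ring | rewrite Htan; ring].
Qed.

Lemma buckling_eigenvalue_char (L s : R) : buckling_eigenvalue L s ->
  0 < s /\ buckling_char (sqrt s * L / 2) = 0.
Proof.
  intros [u [Hsmooth [Hode [Hu0 [Hu1_0 [HuL [Hu1_L [x [Hx Hux]]]]]]]]].
  assert (Hd : forall n t, is_derive (Derive_n u n) t (Derive_n u (S n) t))
    by (intros n t; apply Derive_correct, (Hsmooth (S n) t)).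
  destruct (Rle_lt_dec s 0) as [Hs|Hs].
  - exfalso. apply Hux.
    apply (clamped_nonpos_trivial L s u _ _ _ _ (Hd 0%nat) (Hd 1%nat) (Hd 2%nat) (Hd 3%nat) Hode);
      auto; lra.
  - split; [exact Hs|].
    destruct (Req_dec (buckling_char (sqrt s * L / 2)) 0) as [|Hchar]; [assumption|].
    exfalso. apply Hux.
    apply (clamped_pos_trivial L s u _ _ _ _ (Hd 0%nat) (Hd 1%nat) (Hd 2%nat) (Hd 3%nat) Hode);
      auto; lra.
Qed.

Section IncreasingEnumeration.
Variables (P : R -> Prop) (f : nat -> R).
Hypothesis f_incr : forall j, f j < f (S j).
Hypothesis f_range : forall x, P x <-> exists j, f j = x.

Lemma enum_lt (i j : nat) : (i < j)%nat -> f i < f j.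
Proof.
  induction 1 as [|j _ IH]; [apply f_incr|]. specialize (f_incr j). lra.
Qed.

Lemma enum_le (i j : nat) : (i <= j)%nat -> f i <= f j.
Proof.
  intros Hij. destruct (Nat.eq_dec i j) as [->|Hne]; [lra|]. apply Rlt_le, enum_lt. lia.
Qed.

Lemma enum_first (x : R) : P x -> f 0 <= x.
Proof. intros Hx. apply f_range in Hx as [i <-]. apply enum_le. lia. Qed.

Lemma enum_next (j : nat) (x : R) : P x -> f j < x -> f (S j) <= x.
Proof.
  intros Hx Hjx. apply f_range in Hx as [i <-].
  apply enum_le. destruct (Nat.le_gt_cases i j) as [Hij|]; [|lia].
  apply enum_le in Hij. lra.
Qed.

End IncreasingEnumeration.

Section BucklingSpectrum.
Variables (L : R) (sig : nat -> R).
Hypothesis HL : 0 < L.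
Hypothesis sig_incr : forall j, sig j < sig (S j).
Hypothesis sig_spec : forall s, buckling_eigenvalue L s <-> exists j, sig j = s.

Let xi (j : nat) : R := sqrt (sig j) * L / 2.
Let rho (j : nat) : R := 2 * xi j / PI.

Lemma spectrum_pos (j : nat) : 0 < sig j.
Proof. apply (buckling_eigenvalue_char L), sig_spec. now exists j. Qed.

Lemma xi_incr (j : nat) : xi j < xi (S j).
Proof.
  assert (Hj := spectrum_pos j). assert (Hj1 := sig_incr j).
  unfold xi. apply Rmult_lt_compat_r; [lra|]. apply Rmult_lt_compat_r; [exact HL|].
  apply sqrt_lt_1; lra.
Qed.

Lemma xi_range (x : R) : 0 < x /\ buckling_char x = 0 <-> exists j, xi j = x.
Proof.
  split.
  - intros [Hx Hchar].
    destruct (proj1 (sig_spec _) (buckling_eigenvalue_of_char_root L x HL Hx Hchar)) as [j Hj].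
    exists j. unfold xi. rewrite Hj, sqrt_pow2 by (apply Rlt_le, Rdiv_lt_0_compat; lra).
    field. lra.
  - intros [j <-]. split.
    + assert (0 < sqrt (sig j)) by (apply sqrt_lt_R0, spectrum_pos).
      unfold xi. apply Rmult_lt_0_compat; [apply Rmult_lt_0_compat|]; lra.
    + apply (buckling_eigenvalue_char L), sig_spec. now exists j.
Qed.

Lemma xi_values (m : nat) :
  xi (2 * m) = INR (S m) * PI /\ INR (S m) * PI < xi (S (2 * m)) < INR (S m) * PI + PI.
Proof.
  assert (HP := PI_RGT_0).
  assert (Hfirst := enum_first _ xi xi_incr xi_range).
  assert (Hnext := enum_next _ xi xi_incr xi_range).
  assert (Hroot : forall n, (1 <= n)%nat -> 0 < INR n * PI /\ buckling_char (INR n * PI) = 0).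
  { intros n Hn. split; [|apply buckling_char_nPI].
    apply Rmult_lt_0_compat; [apply lt_0_INR; lia | exact HP]. }
  assert (Heven_odd : forall m, xi (2 * m) = INR (S m) * PI ->
    INR (S m) * PI < xi (S (2 * m)) < INR (S m) * PI + PI).
  { intros k Hk. destruct (buckling_char_root_exists (S k)) as [t [Ht Hct]]; [lia|].
    assert (0 < INR (S k) * PI) by (apply Hroot; lia).
    assert (xi (S (2 * k)) <= t) by (apply Hnext; [split|]; lra).
    assert (xi (2 * k) < xi (S (2 * k))) by apply xi_incr. lra. }
  induction m as [|m IH].
  - assert (Hxi0 : xi (2 * 0) = INR 1 * PI).
    { apply Rle_antisym.
      - apply Hfirst, Hroot. lia.
      - rewrite Rmult_1_l. apply buckling_char_root_ge_PI; apply xi_range; now exists 0%nat. }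
    split; [exact Hxi0 | apply Heven_odd, Hxi0].
  - destruct IH as [IHe IHo].
    assert (Hroot_xi : forall j, 0 < xi j /\ buckling_char (xi j) = 0)
      by (intros j; apply xi_range; now exists j).
    assert (Hxi : xi (2 * S m) = INR (S (S m)) * PI).
    { replace (2 * S m)%nat with (S (S (2 * m))) by lia.
      assert (HSS : INR (S (S m)) * PI = INR (S m) * PI + PI) by (rewrite (S_INR (S m)); ring).
      rewrite HSS.
      assert (Hle : xi (S (S (2 * m))) <= INR (S m) * PI + PI)
        by (apply Hnext; [rewrite <- HSS; apply Hroot; lia | lra]).
      assert (Hlt : xi (S (2 * m)) < xi (S (S (2 * m)))) by apply xi_incr.
      destruct Hle as [Hle|]; [exfalso|assumption].
      assert (xi (S (2 * m)) = xi (S (S (2 * m)))); [|lra].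
      apply (buckling_char_root_unique (S m)); try apply Hroot_xi; lra. }
    split; [exact Hxi | apply Heven_odd, Hxi].
Qed.

Lemma xi_odd_location (m : nat) :
  INR (S m) * PI < xi (S (2 * m)) < INR (S m) * PI + PI / 2 /\
  (forall d, 0 < d <= PI / 2 -> 1 < INR (S m) * PI * sin d ->
     INR (S m) * PI + PI / 2 - d < xi (S (2 * m))).
Proof.
  destruct (xi_values m) as [_ Hodd].
  assert (Hroot : buckling_char (xi (S (2 * m))) = 0) by (apply xi_range; now exists (S (2 * m))).
  destruct (buckling_char_root_location (S m) _ Hodd Hroot) as [Hub Htail].
  split; [lra | exact Htail].
Qed.

Lemma spectrum_rho_even (m : nat) : rho (2 * m) = INR (2 * m) + 2.
Proof.
  unfold rho.
  assert (HP := PI_RGT_0).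
  rewrite (proj1 (xi_values m)), mult_INR, (S_INR m). simpl (INR 2). field. lra.
Qed.

Lemma spectrum_rho_bounds (j : nat) : INR j + 1 <= rho j <= INR j + 2.
Proof.
  assert (HP := PI_RGT_0).
  destruct (Nat.Even_or_Odd j) as [[m ->]|[m ->]].
  - rewrite spectrum_rho_even. lra.
  - assert (H2m : INR (2 * m + 1) = 2 * INR m + 1) by (rewrite plus_INR, mult_INR; simpl; ring).
    rewrite H2m. replace (2 * m + 1)%nat with (S (2 * m)) by lia.
    destruct (xi_odd_location m) as [[Hlo Hhi] _]. rewrite S_INR in Hlo, Hhi.
    unfold rho. split; apply (Rmult_le_reg_r PI); auto; unfold Rdiv; rewrite Rmult_assoc, Rinv_l; lra.
Qed.

Lemma spectrum_rho_tail (d : R) : 0 < d ->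
  exists J, forall j, (J <= j)%nat -> INR j + 2 - d <= rho j.
Proof.
  intros Hd. assert (HP := PI_RGT_0).
  set (d' := Rmin d 1 * PI / 2).
  assert (Hd'd : Rmin d 1 <= d) by apply Rmin_l.
  assert (Hd'1 : Rmin d 1 <= 1) by apply Rmin_r.
  assert (Hd'0 : 0 < Rmin d 1) by (apply Rmin_glb_lt; lra).
  assert (Hd' : 0 < d' <= PI / 2) by (unfold d'; split; nra).
  assert (Hsin : 0 < PI * sin d') by (apply Rmult_lt_0_compat; [lra | apply sin_gt_0; lra]).
  destruct (nfloor_ex (/ (PI * sin d'))) as [M HM]; [apply Rlt_le, Rinv_0_lt_compat, Hsin|].
  exists (2 * S M)%nat. intros j Hj.
  destruct (Nat.Even_or_Odd j) as [[m ->]|[m ->]].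
  - rewrite spectrum_rho_even. lra.
  - replace (2 * m + 1)%nat with (S (2 * m)) by lia.
    destruct (xi_odd_location m) as [_ Htail].
    assert (HmM : INR M + 1 <= INR m) by (rewrite <- S_INR; apply le_INR; lia).
    assert (Hbig : 1 < INR (S m) * PI * sin d').
    { rewrite S_INR.
      assert (/ (PI * sin d') * (PI * sin d') = 1) by (apply Rinv_l; lra). nra. }
    specialize (Htail d' Hd' Hbig).
    rewrite S_INR, mult_INR in *. simpl (INR 2). unfold rho.
    apply (Rmult_le_reg_r PI); auto. unfold Rdiv. rewrite Rmult_assoc, Rinv_l by lra.
    unfold d' in Htail. nra.
Qed.

Lemma spectrum_rho_sq (j : nat) : sig j = (PI / L) ^ 2 * rho j ^ 2.
Proof.
  assert (HP := PI_RGT_0). assert (Hj := spectrum_pos j).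
  unfold rho, xi. rewrite <- (sqrt_sqrt (sig j)) at 1 by lra. field. lra.
Qed.

End BucklingSpectrum.

Lemma pos_part_id (a : R) : 0 <= a -> pos_part a = a.
Proof. apply Rmax_left. Qed.

Lemma pos_part_nonpos (a : R) : a <= 0 -> pos_part a = 0.
Proof. apply Rmax_right. Qed.

Lemma pos_part_le (a b : R) : a <= b -> pos_part a <= pos_part b.
Proof. apply Rle_max_compat_r. Qed.

Lemma pos_part_add_le (a K : R) : 0 <= K -> pos_part (a + K) <= pos_part a + K.
Proof. intros HK. unfold pos_part, Rmax. destruct (Rle_dec (a + K) 0), (Rle_dec a 0); lra. Qed.

Lemma pos_part_scal (c a : R) : 0 <= c -> pos_part (c * a) = c * pos_part a.
Proof. intros Hc. unfold pos_part. rewrite <- RmaxRmult by exact Hc. now rewrite Rmult_0_r. Qed.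

Lemma riesz1_scale (sig tau : nat -> R) (c z : R) : 0 < c -> (forall j, sig j = c * tau j) ->
  riesz1 sig z = c * riesz1 tau (z / c).
Proof.
  intros Hc Hsig. unfold riesz1. rewrite <- Series_scal_l. apply Series_ext. intros j.
  rewrite <- pos_part_scal by lra. f_equal. rewrite Hsig. field. lra.
Qed.

Lemma sum_f_R0_zero_tail (a : nat -> R) (m N : nat) : (m <= N)%nat ->
  (forall j, (m < j)%nat -> a j = 0) -> sum_f_R0 a N = sum_f_R0 a m.
Proof.
  intros HmN Ha. induction HmN as [|N HmN IH]; [reflexivity|].
  rewrite tech5, IH, Ha by lia. ring.
Qed.

Lemma Series_eventually_zero (a : nat -> R) (N : nat) : (forall n, (N < n)%nat -> a n = 0) ->
  Series a = sum_f_R0 a N.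
Proof.
  intros Ha. apply is_series_unique.
  assert (Hlim : is_lim_seq (sum_n a) (sum_f_R0 a N)).
  { apply (is_lim_seq_ext_loc (fun _ => sum_f_R0 a N)); [|apply is_lim_seq_const].
    exists N. intros n Hn. rewrite sum_n_Reals. symmetry. apply sum_f_R0_zero_tail; assumption. }
  exact Hlim.
Qed.

Lemma sum_shifted_squares (c Y : R) (n : nat) :
  sum_f_R0 (fun j => Y ^ 2 - (INR j + c) ^ 2) n =
  (INR n + 1) * Y ^ 2 - ((INR n + 1 + c - / 2) ^ 3 - (c - / 2) ^ 3) / 3 + (INR n + 1) / 12.
Proof.
  induction n as [|n IH].
  - simpl. field.
  - rewrite tech5, IH, S_INR. field.
Qed.

Lemma sum_pos_part_shifted_squares (c Y : R) (N : nat) : 1 <= c <= 2 -> c <= Y -> Y < INR N + 1 ->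
  Rabs (sum_f_R0 (fun j => pos_part (Y ^ 2 - (INR j + c) ^ 2)) N
        - (2 / 3 * Y ^ 3 - (c - / 2) * Y ^ 2)) <= Y / 3 + 2.
Proof.
  intros Hc HY HN.
  destruct (nfloor_ex (Y - c)) as [m Hm]; [lra|].
  assert (HmN : (m <= N)%nat) by (apply INR_le; lra).
  rewrite (sum_f_R0_zero_tail _ m N HmN).
  2:{ intros j Hj. apply pos_part_nonpos. apply le_INR in Hj. rewrite S_INR in Hj. nra. }
  rewrite (sum_eq _ (fun j => Y ^ 2 - (INR j + c) ^ 2)).
  2:{ intros j Hj. apply pos_part_id. apply le_INR in Hj. assert (0 <= INR j) by apply pos_INR. nra. }
  rewrite sum_shifted_squares.
  set (e := INR m + / 2 + c - Y).
  replace ((INR m + 1) * Y ^ 2 - ((INR m + 1 + c - / 2) ^ 3 - (c - / 2) ^ 3) / 3 + (INR m + 1) / 12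
           - (2 / 3 * Y ^ 3 - (c - / 2) * Y ^ 2))
    with (- (e ^ 2 * Y) - e ^ 3 / 3 + (c - / 2) ^ 3 / 3 + (INR m + 1) / 12)
    by (unfold e; field).
  assert (He : - / 2 < e <= / 2) by (unfold e; lra).
  assert (Hee : 0 <= e * e <= / 4) by (split; nra).
  assert (He2 : 0 <= e ^ 2 * Y <= Y / 4) by (simpl; rewrite Rmult_1_r; split; nra).
  assert (He3 : - / 8 <= e ^ 3 <= / 8) by (simpl; rewrite Rmult_1_r; split; nra).
  assert (Hcc : 0 <= (c - / 2) * (c - / 2) <= 9 / 4) by (split; nra).
  assert (Hc3 : 0 <= (c - / 2) ^ 3 <= 27 / 8) by (simpl; rewrite Rmult_1_r; split; nra).
  assert (0 <= INR m) by apply pos_INR.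
  apply Rabs_le. split; lra.
Qed.

Section LatticeRieszMean.
Variable rho : nat -> R.
Hypothesis rho_bounds : forall j, INR j + 1 <= rho j <= INR j + 2.
Hypothesis rho_tail : forall d, 0 < d -> exists J, forall j, (J <= j)%nat -> INR j + 2 - d <= rho j.

Let tau (j : nat) : R := rho j ^ 2.

Lemma riesz1_lattice_truncate (Y : R) (m : nat) : 0 <= Y < INR m + 1 ->
  riesz1 tau (Y ^ 2) = sum_f_R0 (fun j => pos_part (Y ^ 2 - rho j ^ 2)) m.
Proof.
  intros HY. apply Series_eventually_zero. intros n Hn. apply pos_part_nonpos.
  apply le_INR in Hn. rewrite S_INR in Hn. specialize (rho_bounds n).
  unfold tau. apply Rle_minus, pow_incr. lra.
Qed.

Lemma riesz1_lattice_lower (Y : R) : 2 <= Y ->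
  2 / 3 * Y ^ 3 - 3 / 2 * Y ^ 2 - (Y / 3 + 2) <= riesz1 tau (Y ^ 2).
Proof.
  intros HY. destruct (nfloor_ex Y) as [m Hm]; [lra|].
  rewrite (riesz1_lattice_truncate Y m) by lra.
  assert (Hsum := sum_pos_part_shifted_squares 2 Y m).
  apply Rabs_le_between in Hsum; [|lra..].
  assert (sum_f_R0 (fun j => pos_part (Y ^ 2 - (INR j + 2) ^ 2)) m
          <= sum_f_R0 (fun j => pos_part (Y ^ 2 - rho j ^ 2)) m).
  { apply sum_Rle. intros j _. apply pos_part_le.
    apply Rplus_le_compat_l, Ropp_le_contravar, pow_incr.
    specialize (rho_bounds j). assert (0 <= INR j) by apply pos_INR. lra. }
  lra.
Qed.

Lemma riesz1_lattice_upper (d : R) : 0 < d <= 1 -> exists K, 0 <= K /\ forall Y, 2 <= Y ->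
  riesz1 tau (Y ^ 2) <= 2 / 3 * Y ^ 3 - (3 / 2 - d) * Y ^ 2 + (Y / 3 + 2) + (Y + 1) * K.
Proof.
  intros Hd. destruct (rho_tail d) as [J HJ]; [lra|].
  (* below J, the loss in replacing rho j by j + 2 - d is at most K *)
  set (K := (INR J + 2) ^ 2).
  assert (HK : 0 <= K) by apply pow2_ge_0.
  exists K. split; [exact HK|]. intros Y HY.
  destruct (nfloor_ex Y) as [m Hm]; [lra|].
  rewrite (riesz1_lattice_truncate Y m) by lra.
  assert (Hsum := sum_pos_part_shifted_squares (2 - d) Y m).
  apply Rabs_le_between in Hsum; [|lra..].
  assert (Hterm : forall j, pos_part (Y ^ 2 - rho j ^ 2) <= pos_part (Y ^ 2 - (INR j + (2 - d)) ^ 2) + K).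
  { intros j. eapply Rle_trans; [|apply pos_part_add_le, HK]. apply pos_part_le.
    assert (Hj0 : 0 <= INR j) by apply pos_INR.
    destruct (Nat.le_gt_cases J j) as [HJj|HJj].
    - assert ((INR j + (2 - d)) ^ 2 <= rho j ^ 2) by (apply pow_incr; specialize (HJ j HJj); lra).
      lra.
    - apply le_INR in HJj. rewrite S_INR in HJj.
      assert ((INR j + (2 - d)) ^ 2 <= K) by (apply pow_incr; lra).
      assert (0 <= rho j ^ 2) by apply pow2_ge_0. lra. }
  eapply Rle_trans; [apply sum_Rle; intros j _; apply Hterm|].
  rewrite plus_sum, sum_cte.
  replace (3 / 2 - d) with (2 - d - / 2) by field.
  assert (INR (S m) * K <= (Y + 1) * K) by (apply Rmult_le_compat_r; [exact HK | rewrite S_INR; lra]).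
  lra.
Qed.

Lemma riesz1_lattice_asymptotic (eps : R) : 0 < eps -> exists Y0, 0 <= Y0 /\ forall Y, Y0 < Y ->
  Rabs (riesz1 tau (Y ^ 2) - (2 / 3 * Y ^ 3 - 3 / 2 * Y ^ 2)) <= eps * Y ^ 2.
Proof.
  intros Heps.
  set (d := Rmin (eps / 2) 1).
  assert (Hd : 0 < d <= 1) by (split; [apply Rmin_glb_lt; lra | apply Rmin_r]).
  assert (Hd2 : d <= eps / 2) by apply Rmin_l.
  destruct (riesz1_lattice_upper d Hd) as [K [HK Hupper]].
  (* the O(Y) error terms are at most B Y for Y >= 2 *)
  set (B := / 3 + 2 + 2 * K).
  exists (Rmax 2 (2 * B / eps)). split; [apply Rle_trans with 2; [lra | apply Rmax_l]|].
  intros Y HY.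
  assert (HY2 : 2 < Y) by (apply Rle_lt_trans with (Rmax 2 (2 * B / eps)); [apply Rmax_l | exact HY]).
  assert (HYB : 2 * B <= eps * Y).
  { assert (HBY : 2 * B / eps < Y)
      by (apply Rle_lt_trans with (Rmax 2 (2 * B / eps)); [apply Rmax_r | exact HY]).
    apply (Rmult_lt_compat_l eps) in HBY; [|exact Heps].
    replace (eps * (2 * B / eps)) with (2 * B) in HBY by (field; lra). lra. }
  assert (Herr : Y / 3 + 2 + (Y + 1) * K <= eps / 2 * Y ^ 2).
  { assert (Y / 3 + 2 + (Y + 1) * K <= B * Y) by (unfold B; nra). simpl. nra. }
  assert (Hlow := riesz1_lattice_lower Y (Rlt_le _ _ HY2)).
  assert (Hup := Hupper Y (Rlt_le _ _ HY2)).
  assert (HdY : d * Y ^ 2 <= eps / 2 * Y ^ 2) by (apply Rmult_le_compat_r; [apply pow2_ge_0 | exact Hd2]).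
  assert (0 <= Y ^ 2) by apply pow2_ge_0.
  assert (0 <= (Y + 1) * K) by (apply Rmult_le_pos; lra).
  apply Rabs_le. split; lra.
Qed.

End LatticeRieszMean.

Lemma weyl_term_rescale (L z : R) : 0 < L -> 0 < z ->
  2 * L / (3 * PI) * Rpower z (3 / 2) - 3 / 2 * z =
  (PI / L) ^ 2 * (2 / 3 * (sqrt z * L / PI) ^ 3 - 3 / 2 * (sqrt z * L / PI) ^ 2).
Proof.
  intros HL Hz. assert (HP := PI_RGT_0).
  replace (3 / 2) with (1 + / 2) at 1 by field.
  rewrite Rpower_plus, Rpower_1, Rpower_sqrt by exact Hz.
  assert (Hr : sqrt z * sqrt z = z) by (apply sqrt_sqrt; lra).
  set (r := sqrt z) in *. rewrite <- Hr. field. lra.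
Qed.

Theorem theorem1p4 (L : R) (sig : nat -> R) :
  0 < L ->
  (forall j, sig j < sig (S j)) ->
  (forall s, buckling_eigenvalue L s <-> exists j, sig j = s) ->
  forall eps : R, 0 < eps ->
    exists M : R, forall z : R, M < z ->
      Rabs (riesz1 sig z
            - (2 * L / (3 * PI) * Rpower z (3 / 2) - 3 / 2 * z)) <= eps * z.
Proof.
  intros HL Hincr Hspec eps Heps. assert (HP := PI_RGT_0).
  set (c := (PI / L) ^ 2).
  assert (Hc : 0 < c) by (apply pow2_gt_0; apply Rgt_not_eq, Rdiv_lt_0_compat; lra).
  set (rho := fun j => 2 * (sqrt (sig j) * L / 2) / PI).
  destruct (riesz1_lattice_asymptotic rho (spectrum_rho_bounds L sig HL Hincr Hspec)
              (spectrum_rho_tail L sig HL Hincr Hspec) eps Heps) as [Y0 [HY0 Hasym]].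
  exists (c * Y0 ^ 2). intros z Hz.
  assert (Hz0 : 0 < z) by (assert (0 <= c * Y0 ^ 2) by (apply Rmult_le_pos; [lra | apply pow2_ge_0]); lra).
  set (Y := sqrt z * L / PI).
  assert (HzY : z / c = Y ^ 2).
  { unfold Y, c. rewrite <- (sqrt_sqrt z) at 1 by lra. field. lra. }
  assert (HYY0 : Y0 < Y).
  { assert (HY0Y : Y0 ^ 2 < Y ^ 2)
      by (rewrite <- HzY; apply (Rlt_div_r (Y0 ^ 2) z c); [lra | rewrite Rmult_comm; exact Hz]).
    assert (0 <= Y)
      by (apply Rmult_le_pos; [apply Rmult_le_pos; [apply sqrt_pos | lra] | apply Rlt_le, Rinv_0_lt_compat; lra]).
    simpl in HY0Y. nra. }
  rewrite (riesz1_scale sig (fun j => rho j ^ 2) c z Hc (spectrum_rho_sq L sig HL Hspec)), HzY.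
  rewrite weyl_term_rescale by assumption. fold Y c.
  rewrite <- Rmult_minus_distr_l, Rabs_mult, (Rabs_pos_eq c) by lra.
  replace (eps * z) with (c * (eps * Y ^ 2)) by (rewrite <- HzY; field; lra).
  apply Rmult_le_compat_l; [lra | apply Hasym, HYY0].
Qed.
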